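(* Let $Q$ be a weakly compact convex subset of a Banach space $U$. Let $r>0$, $\beta\in[0,1)$, and let $\{\beta_n\}_n$ be a sequence of real numbers with $\beta_n\to\beta$. Suppose $T:Q\to Q$ satisfies: for all $p,q\in Q$ and $n\geq 1$, $\|p-q\|<r$ implies $\|T^np-T^nq\|\leq\beta_n\|p-q\|$. If there exists $q_0\in Q$ such that the asymptotic radius of $\{T^nq_0\}_n$ relative to $Q$ is less than $r$, then $T$ has a unique fixed point.
   Context: A map as in the statement is called a uniformly asymptotic local contraction. For a bounded sequence $\{x_n\}_n$ in $U$, its asymptotic radius relative to $Q$ is $\inf_{y\in Q}\limsup_{n\to\infty}\|x_n-y\|$. *)

From HB Require Import structures.
From mathcomp Require Import all_boot all_order all_algebra.
From mathcomp Require Import all_classical all_reals all_analysis.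
Set Implicit Arguments. Unset Strict Implicit. Unset Printing Implicit Defensive.
Import Order.TTheory GRing.Theory Num.Theory.
Import numFieldNormedType.Exports.
Local Open Scope classical_set_scope.
Local Open Scope ring_scope.

Definition dual_functional (R : realType) (U : normedModType R) (f : U -> R) :=
  (forall (a : R) (x y : U), f (a *: x + y) = a * f x + f y) /\ continuous f.

Definition weakly_open (R : realType) (U : normedModType R) (W : set U) :=
  forall x, W x -> exists (n : nat) (fs : 'I_n -> U -> R) (e : R),
    [/\ forall i, dual_functional (fs i), 0 < e &
        [set y | forall i, `|fs i y - fs i x| < e] `<=` W].

Definition weakly_compact (R : realType) (U : normedModType R) (Q : set U) :=
  forall C : set (set U), (forall W, C W -> weakly_open W) ->
    Q `<=` \bigcup_(W in C) W ->
    exists (n : nat) (Ws : 'I_n -> set U), (forall i, C (Ws i)) /\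
      Q `<=` \bigcup_i Ws i.

Definition convex_subset (R : realType) (U : lmodType R) (Q : set U) :=
  forall x y (t : R), Q x -> Q y -> 0 <= t -> t <= 1 ->
    Q (t *: x + (1 - t) *: y).

Definition asymptotic_radius (R : realType) (U : normedModType R)
    (Q : set U) (x : nat -> U) : \bar R :=
  ereal_inf [set limn_esup (fun n => (`|x n - y|)%:E) | y in Q].

From HB Require Import structures.
From mathcomp Require Import all_boot all_order all_algebra.
From mathcomp Require Import all_classical all_reals all_analysis.
From mathcomp Require Import lra.
Import Order.TTheory GRing.Theory Num.Theory.
Import numFieldNormedType.Exports.
Local Open Scope classical_set_scope.
Local Open Scope ring_scope.

(* Since Q is convex, the local estimate for T^m propagates along segments:
   cutting [q, p] into pieces shorter than r shows that T^m is
   betas m-Lipschitz on all of Q.  For m large, betas m < 1, so T^m is a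
   contraction of Q.  Moreover Q is norm-closed: continuous linear
   functionals separate points (Hahn-Banach, obtained by Zorn's lemma on
   graphs of norm-dominated linear functionals), so a point outside Q has a
   norm neighbourhood disjoint from finitely many weakly open sets covering Q.
   Banach's fixed point theorem gives a unique fixed point z of T^m in Q, and
   T z is another one, hence T z = z. *)

Section HahnBanach.
Context {R : realType} {U : normedModType R}.

Definition dominated_linear_graph (G : set (U * R)) :=
  [/\ forall x a y b, G (x, a) -> G (y, b) -> G (x + y, a + b),
      forall t x a, G (x, a) -> G (t *: x, t * a),
      forall x a b, G (x, a) -> G (x, b) -> a = b &
      forall x a, G (x, a) -> a <= `|x|].

Lemma dominated_linear_graphN {G x a} :
  dominated_linear_graph G -> G (x, a) -> G (- x, - a).
Proof. by case=> _ scaleG _ _ /(scaleG (-1)); rewrite scaleN1r mulN1r. Qed.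

Lemma dominated_linear_graph_pairwise {G : set (U * R)} :
  (forall p q, G p -> G q ->
     exists S, [/\ dominated_linear_graph S, S `<=` G, S p & S q]) ->
  dominated_linear_graph G.
Proof.
move=> GS; split.
- move=> x a y b Gx Gy; have [S [[addS _ _ _] SG Sx Sy]] := GS _ _ Gx Gy.
  exact/SG/addS.
- move=> t x a Gx; have [S [[_ scaleS _ _] SG Sx _]] := GS _ _ Gx Gx.
  exact/SG/scaleS.
- move=> x a b Gx Gy; have [S [[_ _ funS _] _ Sx Sy]] := GS _ _ Gx Gy.
  exact: funS Sx Sy.
- move=> x a Gx; have [S [[_ _ _ domS] _ Sx _]] := GS _ _ Gx Gx.
  exact: domS Sx.
Qed.

Lemma dominated_extension_constant {G} y :
  dominated_linear_graph G -> G (0, 0) ->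
  exists c, forall x a, G (x, a) -> a + c <= `|x + y| /\ a - c <= `|x - y|.
Proof.
move=> [addG _ _ domG] G00.
have sep x a x' a' : G (x, a) -> G (x', a') -> a - `|x - y| <= `|x' + y| - a'.
  move=> Gx Gx'; have := domG _ _ (addG _ _ _ _ Gx Gx').
  have := ler_normD (x - y) (x' + y); rewrite addrACA addNr addr0; lra.
pose L := [set p.2 - `|p.1 - y| | p in G].
have L0 : L !=set0 by exists (0 - `|0 - y|), (0, 0).
have L_ub : ubound L (`|0 + y| - 0).
  by move=> _ [[x a] Gx <-]; exact: sep Gx G00.
exists (sup L) => x a Gx; split.
- suff : sup L <= `|x + y| - a by lra.
  by apply: ge_sup => // _ [[x' a'] Gx' <-]; exact: sep Gx' Gx.
- suff : a - `|x - y| <= sup L by lra.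
  by apply: ub_le_sup; [exists (`|0 + y| - 0) | exists (x, a)].
Qed.

Lemma dominated_extension_bound {G y c} :
  dominated_linear_graph G ->
  (forall x a, G (x, a) -> a + c <= `|x + y| /\ a - c <= `|x - y|) ->
  forall x a t, G (x, a) -> a + t * c <= `|x + t *: y|.
Proof.
move=> [_ scaleG _ domG] yc x a t Gx.
have rescale s e : 0 < s -> s^-1 * a + e * c <= `|s^-1 *: x + e *: y| ->
    a + (s * e) * c <= `|x + (s * e) *: y|.
  move=> s0 /(ler_wpM2l (ltW s0)).
  rewrite -[s in s * `|_|](gtr0_norm s0) -normrZ.
  by rewrite mulrDr scalerDr !mulrA !scalerA mulfV ?gt_eqF // mul1r scale1r.
have [t0|t0|->] := ltgtP t 0; last by rewrite mul0r scale0r !addr0; exact: domG.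
- have -> : t = - t * -1 by rewrite mulrN1 opprK.
  apply: rescale; first by rewrite oppr_gt0.
  by rewrite mulN1r scaleN1r; exact: (yc _ _ (scaleG _ _ _ Gx)).2.
- rewrite -[t]mulr1; apply: rescale => //.
  by rewrite mul1r scale1r; exact: (yc _ _ (scaleG _ _ _ Gx)).1.
Qed.

Definition graph_extension (G : set (U * R)) (y : U) (c : R) : set (U * R) :=
  [set p | exists x a t, G (x, a) /\ p = (x + t *: y, a + t * c)].

Lemma graph_extension_dominated {G y c} :
  dominated_linear_graph G -> (forall a, ~ G (y, a)) ->
  (forall x a t, G (x, a) -> a + t * c <= `|x + t *: y|) ->
  dominated_linear_graph (graph_extension G y c).
Proof.
move=> dG; have [addG scaleG funG _] := dG; move=> Gy yc; split.
- move=> _ _ _ _ [x1 [a1 [t1 [Gx1 [-> ->]]]]] [x2 [a2 [t2 [Gx2 [-> ->]]]]].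
  exists (x1 + x2), (a1 + a2), (t1 + t2); split; first exact: addG.
  by rewrite scalerDl mulrDl; congr (_, _); exact: addrACA.
- move=> s _ _ [x [a [t [Gx [-> ->]]]]].
  exists (s *: x), (s * a), (s * t); split; first exact: scaleG.
  by rewrite scalerDr scalerA mulrDr mulrA.
- move=> z _ _ [x1 [a1 [t1 [Gx1 [z1 ->]]]]] [x2 [a2 [t2 [Gx2 [z2 ->]]]]].
  have [t12|t12] := eqVneq t1 t2.
    subst t2; rewrite z1 in z2; move/addIr: z2 => x12; subst x2.
    by rewrite (funG _ _ _ Gx1 Gx2).
  have ty : (t1 - t2) *: y = x2 - x1.
    have e : x1 + t1 *: y = x2 + t2 *: y by rewrite -z1 -z2.
    by rewrite scalerBl -[x2](addrK (t2 *: y)) -e addrAC [x1 + _]addrC addrK.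
  have t12' : t1 - t2 != 0 by rewrite subr_eq0.
  exfalso; apply: (Gy ((t1 - t2)^-1 * (a2 - a1))).
  rewrite -[y](scalerK t12') ty.
  exact: scaleG (addG _ _ _ _ Gx2 (dominated_linear_graphN dG Gx1)).
- by move=> _ _ [x [a [t [Gx [-> ->]]]]]; exact: yc.
Qed.

Lemma dominated_linear_graph_total {G} :
  dominated_linear_graph G -> G (0, 0) ->
  (forall G', dominated_linear_graph G' -> G `<=` G' -> G' `<=` G) ->
  forall y, exists a, G (y, a).
Proof.
move=> dG G00 Gmax y; apply: contrapT => /forallNP Gy.
have [c yc] := dominated_extension_constant y dG G00.
have Gext := graph_extension_dominated dG Gy (dominated_extension_bound dG yc).
have GGext : G `<=` graph_extension G y c.
  by move=> [x a] Gx; exists x, a, 0; rewrite scale0r mul0r !addr0.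
apply: (Gy c); apply: (Gmax _ Gext GGext).
by exists 0, 0, 1; rewrite scale1r mul1r !add0r.
Qed.

Lemma dominated_linear_graph_total_extension {G0} :
  dominated_linear_graph G0 -> G0 (0, 0) ->
  exists G, [/\ dominated_linear_graph G, G0 `<=` G & forall y, exists a, G (y, a)].
Proof.
move=> dG0 G00.
(* Zorn runs over the sets A with A `|` G0 dominated, so that the empty chain
   has an upper bound in the family. *)
pose P := [set A : set (U * R) | dominated_linear_graph (A `|` G0)].
have [A [dA Amax]] : exists A, P A /\ forall B, A `<` B -> ~ P B.
  apply: Zorn_bigcup => F dF Ftot; apply: dominated_linear_graph_pairwise => p q.
  have sub X : F X -> X `|` G0 `<=` (\bigcup_(X in F) X) `|` G0.
    by move=> FX z [Xz|G0z]; [left; exists X | right].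
  move=> [[X FX Xp]|G0p] [[Y FY Yq]|G0q].
  - have [XY|YX] := Ftot _ _ FX FY.
    + by exists (Y `|` G0); split; [exact: dF | exact: sub | left; exact: XY | left].
    + by exists (X `|` G0); split; [exact: dF | exact: sub | left | left; exact: YX].
  - by exists (X `|` G0); split; [exact: dF | exact: sub | left | right].
  - by exists (Y `|` G0); split; [exact: dF | exact: sub | right | left].
  - by exists G0; split => // z G0z; right.
have G0A : G0 `<=` A `|` G0 by move=> z; right.
exists (A `|` G0); split=> //; apply: (dominated_linear_graph_total dA (G0A _ G00)).
move=> G' dG' AG'; apply: contrapT => G'A; apply: (Amax G').
  by split=> [z Az|G'A']; [apply: AG'; left | apply: G'A => z /G'A'; left].
by rewrite /P /= setUidl //; exact: subset_trans G0A AG'.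
Qed.

Lemma dominated_linear_graph_line (x0 : U) :
  x0 != 0 -> dominated_linear_graph [set (t *: x0, t * `|x0|) | t in [set: R]].
Proof.
move=> x00; split.
- move=> _ _ _ _ [t1 _ [<- <-]] [t2 _ [<- <-]].
  by exists (t1 + t2) => //; rewrite scalerDl mulrDl.
- by move=> s _ _ [t _ [<- <-]]; exists (s * t) => //; rewrite scalerA mulrA.
- move=> _ _ _ [t1 _ [<- <-]] [t2 _ [e <-]].
  have : (t1 - t2) *: x0 == 0 by rewrite scalerBl e subrr.
  by rewrite scaler_eq0 (negbTE x00) orbF subr_eq0 => /eqP ->.
- move=> _ _ [t _ [<- <-]]; rewrite normrZ.
  by apply: ler_wpM2r => //; exact: ler_norm.
Qed.

Lemma hahn_banach_norming (x0 : U) : x0 != 0 ->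
  exists f : U -> R, [/\ forall t x y, f (t *: x + y) = t * f x + f y,
    forall x, `|f x| <= `|x| & f x0 = `|x0|].
Proof.
move=> x00; have dline := dominated_linear_graph_line _ x00.
have [|G [dG lineG Gtotal]] := dominated_linear_graph_total_extension dline.
  by exists 0; rewrite ?scale0r ?mul0r.
have [addG scaleG funG domG] := dG.
pose f y := xget 0 [set a | G (y, a)].
have fG y : G (y, f y) by exact: (xgetPex 0 (Gtotal y)).
exists f; split.
- move=> t x y.
  exact: funG _ _ _ (fG (t *: x + y)) (addG _ _ _ _ (scaleG t _ _ (fG x)) (fG y)).
- move=> x; rewrite ler_norml (domG _ _ (fG x)) andbT.
  by have := domG _ _ (dominated_linear_graphN dG (fG x)); rewrite normrN; lra.
- have Gx0 : G (x0, `|x0|) by apply: lineG; exists 1; rewrite ?scale1r ?mul1r.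
  exact: funG _ _ _ (fG x0) Gx0.
Qed.

Lemma dual_functional_separates (x y : U) :
  x != y -> exists f : U -> R, dual_functional f /\ f x != f y.
Proof.
rewrite -subr_eq0 => xy; have [f [f_lin f_le fxy]] := hahn_banach_norming _ xy.
have fB u v : f (u - v) = f u - f v.
  by have := f_lin 1 (u - v) v; rewrite scale1r mul1r subrK => ->; rewrite addrK.
exists f; split; last by rewrite -subr_eq0 -fB fxy normr_eq0.
split=> // u; apply/cvgrPdist_lt => e e0; near=> v.
rewrite -fB; apply: le_lt_trans (f_le _) _.
by near: v; exact: (cvgrPdist_lt _ _).1 (@cvg_id _ (nbhs u)) _ e0.
Unshelve. all: by end_near.
Qed.

End HahnBanach.

Section WeakTopology.
Context {R : realType} {U : normedModType R}.

Lemma weakly_open_dual_ball (f : U -> R) (q : U) (e : R) :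
  dual_functional f -> weakly_open [set y | `|f y - f q| < e].
Proof.
move=> df y /= fy; exists 1%N, (fun=> f), (e - `|f y - f q|).
split=> // [|w /(_ ord0) fw /=]; first by rewrite subr_gt0.
have := ler_distD (f y) (f w) (f q); lra.
Qed.

Lemma weakly_compact_closed {Q : set U} : weakly_compact Q -> closed Q.
Proof.
move=> wQ; rewrite closedE => z nz; apply: contrapT => nQz; apply: nz.
pose C := [set W | exists q f, [/\ Q q, dual_functional f, f q != f z &
  W = [set y | `|f y - f q| < `|f q - f z| / 2]]].
have [n [Ws [CWs QWs]]] : exists n (Ws : 'I_n -> set U),
    (forall i, C (Ws i)) /\ Q `<=` \bigcup_i Ws i.
  apply: wQ => [_ [q [f [_ df _ ->]]]|q Qq]; first exact: weakly_open_dual_ball.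
  have [|f [df fqz]] := dual_functional_separates q z.
    by apply: contraPneq nQz => <-.
  exists [set y | `|f y - f q| < `|f q - f z| / 2]; first by exists q, f.
  by rewrite /= subrr normr0 divr_gt0 // normr_gt0 subr_eq0.
have far_from_Ws i : \forall y \near z, ~ Ws i y.
  have [q [f [_ df fqz ->]]] := CWs i.
  have d0 : 0 < `|f q - f z| / 2 by rewrite divr_gt0 // normr_gt0 subr_eq0.
  near=> y => /= Wy.
  have fy : `|f z - f y| < `|f q - f z| / 2.
    by near: y; exact: (cvgrPdist_lt _ _).1 (df.2 z) _ d0.
  have := ler_distD (f y) (f q) (f z).
  rewrite distrC in fy; rewrite [`|f q - f y|]distrC; lra.
apply: filterS (filter_forall _ far_from_Ws) => y notWs Qy.
by have [i _] := QWs y Qy; apply: notWs.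
Unshelve. all: by end_near.
Qed.

End WeakTopology.

Lemma convex_local_lipschitz {R : realType} {U V : normedModType R}
    {Q : set U} {g : U -> V} {r : R} (k : R) :
  convex_subset Q -> 0 < r ->
  (forall p q, Q p -> Q q -> `|p - q| < r -> `|g p - g q| <= k * `|p - q|) ->
  k.-lipschitz_Q g.
Proof.
move=> cQ r0 gloc [p q] [/= Qp Qq].
pose n := (Num.truncn (`|p - q| / r)).+1.
have n0 : 0 < n%:R :> R by rewrite ltr0n.
pose d := `|p - q| / n%:R.
have d_lt_r : d < r.
  by rewrite ltr_pdivrMr // mulrC -ltr_pdivrMr // truncnS_gt.
pose s i := q + (i%:R / n%:R) *: (p - q).
have Qs i : (i <= n)%N -> Q (s i).
  move=> le_in; have := cQ p q (i%:R / n%:R) Qp Qq.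
  have -> : (i%:R / n%:R) *: p + (1 - i%:R / n%:R) *: q = s i.
    by rewrite /s scalerBl scale1r scalerBr addrCA.
  by apply; rewrite ?divr_ge0 // ler_pdivrMr // mul1r ler_nat.
have ds i : `|s i.+1 - s i| = d.
  rewrite /s opprD addrACA subrr add0r -scalerBl -mulrBl -natrB // subSnn.
  by rewrite mul1r normrZ ger0_norm ?divr_ge0 // mulrC.
have telescope i : (i <= n)%N -> `|g (s i) - g q| <= k * (i%:R * d).
  elim: i => [|i IH] lt_in.
    by rewrite /s mul0r scale0r addr0 subrr normr0 mul0r mulr0.
  apply: le_trans (ler_distD (g (s i)) _ _) _.
  have := gloc _ _ (Qs _ lt_in) (Qs _ (ltnW lt_in)); rewrite ds => /(_ d_lt_r).
  have := IH (ltnW lt_in); rewrite -natr1; lra.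
have := telescope n (leqnn n).
by rewrite /s divff ?gt_eqF // scale1r subrKC /d [n%:R * _]mulrC divfK ?gt_eqF.
Qed.

Theorem mainTheorem6 (R : realType) (U : completeNormedModType R) (Q : set U)
  (r beta : R) (betas : R^nat) (T : U -> U) :
  weakly_compact Q -> convex_subset Q ->
  0 < r -> 0 <= beta -> beta < 1 -> betas @ \oo --> beta ->
  (forall p, Q p -> Q (T p)) ->
  (forall (p q : U) (n : nat), Q p -> Q q -> (1 <= n)%N ->
     `|p - q| < r -> `|iter n T p - iter n T q| <= betas n * `|p - q|) ->
  (exists2 q0, Q q0 & (asymptotic_radius Q (fun n => iter n T q0) < r%:E)%E) ->
  exists! x, Q x /\ T x = x.
Proof.
move=> wQ cQ r0 beta0 beta1 betas_beta TQ Tloc [q0 Qq0 _].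
pose c := (1 + beta) / 2.
have c0 : 0 <= c by rewrite /c; lra.
have c1 : c < 1 by rewrite /c; lra.
have /filter_ex [m [m1 betas_m]] : \forall n \near \oo, (1 <= n)%N /\ betas n < c.
  near=> n; split; first by near: n; exact: nbhs_infty_ge.
  by near: n; apply: cvgr_lt betas_beta _ _; rewrite /c; lra.
have iterQ n : {homo iter n T : p / Q p}.
  by elim: n => // n IH p /IH /TQ.
have Tm_lipschitz : c.-lipschitz_Q (iter m T).
  apply: (convex_local_lipschitz c cQ r0) => p q Qp Qq pq.
  apply: le_trans (Tloc _ _ _ Qp Qq m1 pq) _.
  by rewrite ler_wpM2r // ltW.
have Tm_contraction : is_contraction (mkfun_fun (iterQ m)).
  by exists (NngNum c0).
have [z Qz Tmz] := banach_fixed_point Tm_contraction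
  (weakly_compact_closed wQ) (ex_intro _ q0 Qq0).
have Tm_fixed_uniq w : Q w -> w = iter m T w -> w = z.
  by move=> Qw Tmw; exact: contraction_fixpoint_unique Tm_contraction Qw Qz Tmw Tmz.
have Tz : T z = z.
  apply: (Tm_fixed_uniq _ (TQ _ Qz)).
  by rewrite -iterSr iterS -Tmz.
exists z; split=> [//|w [Qw Tw]].
by apply/esym/(Tm_fixed_uniq _ Qw); rewrite iter_fix.
Unshelve. all: by end_near.
Qed.
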